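(* Let $A,B\colon\mathbb{R}_{>0}\to\mathbb{R}_{>0}$ be continuous functions that are eventually monotone decreasing and satisfy $\lim_{x\to\infty}A(x)=\lim_{x\to\infty}B(x)=0$. Let $(a_t)_{t\ge1}$ and $(b_t)_{t\ge1}$ be sequences in $\mathbb{R}_{>0}$ satisfying $a_{t+1}=a_t+A(a_t)$ and $b_{t+1}=b_t+B(b_t)$ for all $t$. If $\lim_{x\to\infty}A(x)/B(x)=1$, then $\lim_{t\to\infty}a_t/b_t=1$. *)

From Stdlib Require Import Reals.
Open Scope R_scope.

Definition lim_at_infty (f : R -> R) (l : R) : Prop :=
  forall eps : R, 0 < eps ->
    exists M : R, forall x : R, M <= x -> Rabs (f x - l) < eps.

Definition eventually_decreasing (f : R -> R) : Prop :=
  exists M : R, forall x y : R, M <= x -> x <= y -> f y <= f x.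

(* The orbits a_t, b_t increase to infinity: a bounded orbit would converge to
   a positive fixed point L of x |-> x + A x, i.e. A L = 0.  For d > 0 and
   large x we have A x <= (1 + d) B x, and B is decreasing there, so the gap
   a_t - (1 + d) b_t cannot grow while a_t > b_t (then A a_t <= (1 + d) B a_t
   <= (1 + d) B b_t), while if a_t <= b_t it becomes negative after one step
   (as A <= 1 and d b_t >= 1 eventually).  Hence a_t <= (1 + d) b_t + C and
   symmetrically b_t <= (1 + d) a_t + C, which forces a_t / b_t -> 1. *)
From Stdlib Require Import Reals Lra Lia Classical.
Open Scope R_scope.

Lemma orbit_cv_infty (A : R -> R) (a : nat -> R)
  (hApos : forall x, 0 < x -> 0 < A x)
  (hAcont : forall x, 0 < x -> continuity_pt A x)
  (hapos : forall t, 0 < a t)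
  (harec : forall t, a (S t) = a t + A (a t)) :
  cv_infty a.
Proof.
  assert (Hgrow : Un_growing a).
  { intro t. rewrite harec. pose proof (hApos _ (hapos t)). lra. }
  intro K. destruct (classic (exists n, K < a n)) as [[n Hn] | Hbounded].
  - exists n. intros m Hm. pose proof (growing_prop a m n Hgrow Hm). lra.
  - exfalso.
    assert (Hub : has_ub a).
    { exists K. intros r [n ->]. apply Rnot_lt_le. intro Hn. eauto. }
    destruct (growing_cv a Hgrow Hub) as [L HL].
    assert (HL0 : 0 < L).
    { pose proof (growing_ineq a L Hgrow HL 0). pose proof (hapos 0%nat). lra. }
    assert (Hincr : Un_cv (fun n => a (n + 1)%nat - a n) (L - L)).
    { apply CV_minus; [apply CV_shift'|]; exact HL. }
    assert (HAL : Un_cv (fun n => a (n + 1)%nat - a n) (A L)).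
    { intros e He. destruct (continuity_seq A a L (hAcont L HL0) HL e He) as [N HN].
      exists N. intros n Hn. rewrite Nat.add_1_r, harec.
      replace (a n + A (a n) - a n) with (A (a n)) by ring. exact (HN n Hn). }
    pose proof (UL_sequence _ _ _ Hincr HAL). pose proof (hApos L HL0). lra.
Qed.

Lemma ratio_eventually_between (A B : R -> R) (d : R) (hd : 0 < d)
  (hBpos : forall x, 0 < x -> 0 < B x)
  (hAB : lim_at_infty (fun x => A x / B x) 1) :
  exists M, forall x, M <= x -> A x <= (1 + d) * B x /\ B x <= (1 + d) * A x.
Proof.
  (* |r - 1| < d / (1 + d) puts r in (1 / (1 + d), 1 + d). *)
  destruct (hAB (d / (1 + d))) as [M HM].
  { apply Rdiv_lt_0_compat; lra. }
  exists (Rmax M 1). intros x Hx.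
  pose proof (Rmax_l M 1). pose proof (Rmax_r M 1).
  assert (HBx : 0 < B x) by (apply hBpos; lra).
  assert (Hr : Rabs (A x / B x - 1) < d / (1 + d)) by (apply HM; lra).
  apply Rabs_def2 in Hr. destruct Hr as [Hup Hlow].
  assert (HAx : A x = A x / B x * B x) by (field; lra).
  assert (Hq : d / (1 + d) * (1 + d) = d) by (field; lra).
  set (r := A x / B x) in *. set (q := d / (1 + d)) in *.
  assert (Hup' : r <= 1 + d) by nra.
  assert (Hlow' : 1 <= (1 + d) * r) by nra.
  rewrite HAx. split; nra.
Qed.

Section Comparison.

Variables (A B : R -> R) (d M : R).
Hypothesis hd : 0 < d.
Hypothesis hBnonneg : forall x, M <= x -> 0 <= B x.
Hypothesis hAB : forall x, M <= x -> A x <= (1 + d) * B x.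
Hypothesis hBdec : forall x y, M <= x -> x <= y -> B y <= B x.
Hypothesis hAle1 : forall x, M <= x -> A x <= 1.

Lemma orbit_gap_step (x y : R) :
  M <= x -> M <= y -> 1 <= d * y ->
  x + A x - (1 + d) * (y + B y) <= Rmax (x - (1 + d) * y) 0.
Proof.
  intros Hx Hy Hdy.
  pose proof (hBnonneg y Hy).
  destruct (Rlt_or_le y x) as [Hyx | Hxy].
  - assert (B x <= B y) by (apply hBdec; lra).
    pose proof (hAB x Hx). pose proof (Rmax_l (x - (1 + d) * y) 0). nra.
  - pose proof (hAle1 x Hx). pose proof (Rmax_r (x - (1 + d) * y) 0). nra.
Qed.

Lemma orbit_gap_bounded (a b : nat -> R)
  (harec : forall t, a (S t) = a t + A (a t))
  (hbrec : forall t, b (S t) = b t + B (b t))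
  (ha : cv_infty a) (hb : cv_infty b) :
  exists C N, forall t, (N <= t)%nat -> a t <= (1 + d) * b t + C.
Proof.
  destruct (ha M) as [Na HNa].
  destruct (hb (Rmax M (1 / d))) as [Nb HNb].
  set (N := Nat.max Na Nb).
  set (C := Rmax (a N - (1 + d) * b N) 0).
  assert (Hgap : forall k, a (N + k)%nat - (1 + d) * b (N + k)%nat <= C).
  { induction k as [|k IH].
    - rewrite Nat.add_0_r. apply Rmax_l.
    - rewrite Nat.add_succ_r, harec, hbrec.
      assert (Hb : Rmax M (1 / d) < b (N + k)%nat) by (apply HNb; lia).
      pose proof (Rmax_l M (1 / d)). pose proof (Rmax_r M (1 / d)).
      assert (Hdb : 1 <= d * b (N + k)%nat).
      { replace 1 with (d * (1 / d)) by (field; lra).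
        apply Rmult_le_compat_l; lra. }
      eapply Rle_trans; [apply orbit_gap_step; auto|].
      + left. apply HNa. lia.
      + lra.
      + apply Rmax_lub; [exact IH | apply Rmax_r]. }
  exists C, N. intros t Ht.
  replace t with (N + (t - N))%nat by lia.
  pose proof (Hgap (t - N)%nat). lra.
Qed.

End Comparison.

Lemma orbit_le_affine (A B : R -> R) (a b : nat -> R) (d : R) (hd : 0 < d)
  (hBpos : forall x, 0 < x -> 0 < B x)
  (hAB : exists M, forall x, M <= x -> A x <= (1 + d) * B x)
  (hBdec : eventually_decreasing B)
  (hAlim : lim_at_infty A 0)
  (harec : forall t, a (S t) = a t + A (a t))
  (hbrec : forall t, b (S t) = b t + B (b t))
  (ha : cv_infty a) (hb : cv_infty b) :
  exists C N, forall t, (N <= t)%nat -> a t <= (1 + d) * b t + C.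
Proof.
  destruct hAB as [M1 H1]. destruct hBdec as [M2 H2].
  destruct (hAlim 1 Rlt_0_1) as [M3 H3].
  set (M := Rmax (Rmax M1 M2) (Rmax M3 1)).
  assert (HM : M1 <= M /\ M2 <= M /\ M3 <= M /\ 1 <= M).
  { unfold M. repeat split; repeat (apply Rmax_Rle; (left + right));
      apply Rle_refl. }
  apply (orbit_gap_bounded A B d M); auto; intros x Hx.
  - left. apply hBpos. lra.
  - apply H1. lra.
  - intros y Hxy. apply H2; lra.
  - pose proof (H3 x ltac:(lra)) as H. rewrite Rminus_0_r in H.
    apply Rabs_def2 in H. lra.
Qed.

Lemma ratio_cv_one_of_affine_bounds (a b : nat -> R) (hb : cv_infty b)
  (hbounds : forall d, 0 < d -> exists C N, forall t, (N <= t)%nat ->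
     a t <= (1 + d) * b t + C /\ b t <= (1 + d) * a t + C) :
  Un_cv (fun t => a t / b t) 1.
Proof.
  intros eps Heps.
  set (d := eps / 3).
  destruct (hbounds d ltac:(unfold d; lra)) as [C [N1 HN1]].
  destruct (hb (Rabs C / d)) as [N2 HN2].
  exists (Nat.max N1 N2). intros t Ht.
  destruct (HN1 t ltac:(lia)) as [Hab Hba].
  assert (Hb : Rabs C / d < b t) by (apply HN2; lia).
  assert (HCd : Rabs C < d * b t).
  { replace (Rabs C) with (d * (Rabs C / d)) by (unfold d; field; lra).
    apply Rmult_lt_compat_l; [unfold d|]; lra. }
  pose proof (Rle_abs C). pose proof (Rle_abs (- C)) as HnC. rewrite Rabs_Ropp in HnC.
  assert (Hbt : 0 < b t) by (unfold d in HCd; nra).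
  unfold R_dist.
  replace (a t / b t - 1) with ((a t - b t) / b t) by (field; lra).
  unfold Rdiv. rewrite Rabs_mult, Rabs_inv, (Rabs_right (b t)) by lra.
  apply (Rmult_lt_reg_r (b t)); [lra|].
  rewrite Rmult_assoc, Rinv_l, Rmult_1_r by lra.
  apply Rabs_def1; unfold d in *; nra.
Qed.

Theorem lemma2 (A B : R -> R) (a b : nat -> R)
  (hApos : forall x, 0 < x -> 0 < A x)
  (hBpos : forall x, 0 < x -> 0 < B x)
  (hAcont : forall x, 0 < x -> continuity_pt A x)
  (hBcont : forall x, 0 < x -> continuity_pt B x)
  (hAdec : eventually_decreasing A)
  (hBdec : eventually_decreasing B)
  (hAlim : lim_at_infty A 0)
  (hBlim : lim_at_infty B 0)
  (hapos : forall t, (1 <= t)%nat -> 0 < a t)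
  (hbpos : forall t, (1 <= t)%nat -> 0 < b t)
  (harec : forall t, (1 <= t)%nat -> a (S t) = a t + A (a t))
  (hbrec : forall t, (1 <= t)%nat -> b (S t) = b t + B (b t))
  (hAB : lim_at_infty (fun x => A x / B x) 1) :
  Un_cv (fun t => a t / b t) 1.
Proof.
  apply CV_shift with 1%nat.
  set (a' := fun t => a (t + 1)%nat). set (b' := fun t => b (t + 1)%nat).
  assert (ha'rec : forall t, a' (S t) = a' t + A (a' t)).
  { intro t. unfold a'. rewrite !Nat.add_1_r. apply harec. lia. }
  assert (hb'rec : forall t, b' (S t) = b' t + B (b' t)).
  { intro t. unfold b'. rewrite !Nat.add_1_r. apply hbrec. lia. }
  assert (ha' : cv_infty a').
  { apply (orbit_cv_infty A); auto. intro t. apply hapos. lia. }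
  assert (hb' : cv_infty b').
  { apply (orbit_cv_infty B); auto. intro t. apply hbpos. lia. }
  apply (ratio_cv_one_of_affine_bounds a' b' hb'). intros d hd.
  destruct (ratio_eventually_between A B d hd hBpos hAB) as [M HM].
  destruct (orbit_le_affine A B a' b' d) as [C1 [N1 H1]]; auto.
  { exists M. intros x Hx. apply HM, Hx. }
  destruct (orbit_le_affine B A b' a' d) as [C2 [N2 H2]]; auto.
  { exists M. intros x Hx. apply HM, Hx. }
  exists (Rmax C1 C2), (Nat.max N1 N2). intros t Ht.
  pose proof (Rmax_l C1 C2). pose proof (Rmax_r C1 C2).
  pose proof (H1 t ltac:(lia)). pose proof (H2 t ltac:(lia)). split; lra.
Qed.
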